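(* Let $\{A,T',U',R,Q\}$ be a data set for the relaxed commutant lifting problem such that $A$ is a strict contraction ($\|A\|<1$) and $R$ is left invertible. Then there exists a unique contractive interpolant for $\{A,T',U',R,Q\}$ if and only if $\overline{Q\mathcal{H}_0}=\mathcal{H}$ or $T'$ is an isometry.
   Context: For a subspace $\mathcal{V}$ of a Hilbert space $\mathcal{W}$, $\Pi_{\mathcal{V}}$ denotes the orthogonal projection of $\mathcal{W}$ onto $\mathcal{V}$. A data set $\{A,T',U',R,Q\}$ consists of: a contraction $A:\mathcal{H}\to\mathcal{H}'$; a contraction $T'$ on $\mathcal{H}'$; a minimal isometric lifting $U'$ of $T'$, i.e. an isometry $U'$ on a Hilbert space $\mathcal{K}'\supseteq\mathcal{H}'$ such that $\mathcal{H}'$ is cyclic for $U'$ and $\Pi_{\mathcal{H}'}U'=T'\Pi_{\mathcal{H}'}$; and operators $R,Q:\mathcal{H}_0\to\mathcal{H}$ with $T'AR=AQ$ and $R^*R\le Q^*Q$. A contractive interpolant is a contraction $B:\mathcal{H}\to\mathcal{K}'$ with $\Pi_{\mathcal{H}'}B=A$ and $U'BR=BQ$. An operator $C$ is left invertible if $DC=I$ for some bounded operator $D$. *)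

From HB Require Import structures.
From mathcomp Require Import all_boot all_order all_algebra.
From mathcomp Require Import reals.
From mathcomp Require Import complex.
Set Implicit Arguments. Unset Strict Implicit. Unset Printing Implicit Defensive.
Import Order.TTheory GRing.Theory Num.Theory.
Local Open Scope ring_scope.

Section HilbertDefs.
Variable F : realType.
Local Notation C := (F[i]).

Definition inner_product_axioms (V : lmodType C) (ip : V -> V -> C) : Prop :=
  [/\ forall (a : C) (x y z : V), ip (a *: x + y) z = a * ip x z + ip y z,
      forall x y : V, ip y x = conjc (ip x y),
      forall x : V, complex.Im (ip x x) = 0 /\ 0 <= complex.Re (ip x x)
    & forall x : V, ip x x = 0 -> x = 0].

Definition ip_norm (V : lmodType C) (ip : V -> V -> C) (x : V) : F :=
  Num.sqrt (complex.Re (ip x x)).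

Definition ip_complete (V : lmodType C) (ip : V -> V -> C) : Prop :=
  forall u : nat -> V,
    (forall e : F, 0 < e -> exists N, forall m n, (N <= m)%N -> (N <= n)%N ->
       ip_norm ip (u m - u n) < e) ->
    exists l : V, forall e : F, 0 < e -> exists N, forall n, (N <= n)%N ->
       ip_norm ip (u n - l) < e.

Record hilbertSpace := HilbertSpace {
  hs_sort :> lmodType C;
  hs_ip : hs_sort -> hs_sort -> C;
  hs_ip_axioms : inner_product_axioms hs_ip;
  hs_complete : ip_complete hs_ip }.

Definition hnorm (V : hilbertSpace) (x : V) : F := ip_norm (@hs_ip V) x.
Definition hip (V : hilbertSpace) (x y : V) : C := @hs_ip V x y.

Section Ops.
Variables V W : hilbertSpace.

Definition is_linear (T : V -> W) : Prop :=
  forall (a : C) (x y : V), T (a *: x + y) = a *: T x + T y.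

Definition bounded_op (T : V -> W) : Prop :=
  is_linear T /\ exists c : F, forall x, hnorm (T x) <= c * hnorm x.

Definition contraction (T : V -> W) : Prop :=
  bounded_op T /\ forall x, hnorm (T x) <= hnorm x.

Definition strict_contraction (T : V -> W) : Prop :=
  bounded_op T /\ exists c : F, c < 1 /\ forall x, hnorm (T x) <= c * hnorm x.

Definition isometry (T : V -> W) : Prop :=
  bounded_op T /\ forall x, hnorm (T x) = hnorm x.

End Ops.

Definition left_invertible (V W : hilbertSpace) (T : V -> W) : Prop :=
  exists D : W -> V, bounded_op D /\ forall x, D (T x) = x.

Section Sets.
Variable V : hilbertSpace.

Definition hclosure (X : V -> Prop) : V -> Prop :=
  fun v => forall e : F, 0 < e -> exists x, X x /\ hnorm (v - x) < e.

Definition lin_span (X : V -> Prop) : V -> Prop :=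
  fun v => exists (n : nat) (a : 'I_n -> C) (w : 'I_n -> V),
    (forall i, X (w i)) /\ v = \sum_(i < n) a i *: w i.

Definition closed_set (X : V -> Prop) : Prop :=
  forall v, hclosure X v -> X v.

Definition closed_subspace (X : V -> Prop) : Prop :=
  [/\ X 0, (forall (a : C) x y, X x -> X y -> X (a *: x + y)) & closed_set X].

Definition orth_proj (X : V -> Prop) (P : V -> V) : Prop :=
  forall v, X (P v) /\ forall x, X x -> hip (v - P v) x = 0.
End Sets.

(* A contraction T' on the closed subspace H' (given by a map on K' leaving H' invariant) *)
Definition contraction_on (K : hilbertSpace) (H' : K -> Prop) (T : K -> K) : Prop :=
  [/\ forall x, H' x -> H' (T x),
      (forall (a : C) x y, H' x -> H' y -> T (a *: x + y) = a *: T x + T y)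
    & forall x, H' x -> hnorm (T x) <= hnorm x].

Definition isometry_on (K : hilbertSpace) (H' : K -> Prop) (T : K -> K) : Prop :=
  forall x, H' x -> hnorm (T x) = hnorm x.

Definition minimal_isometric_lifting (K : hilbertSpace) (H' : K -> Prop)
    (P : K -> K) (T U : K -> K) : Prop :=
  [/\ isometry U,
      (forall k, P (U k) = T (P k))
    & forall k, hclosure (lin_span (fun y => exists n h, H' h /\ y = iter n U h)) k].

(* R^* R <= Q^* Q, i.e. <R^*R x, x> <= <Q^*Q x, x>, i.e. ||R x||^2 <= ||Q x||^2 *)
Definition op_le_sq (V W : hilbertSpace) (R Q : V -> W) : Prop :=
  forall x, hnorm (R x) <= hnorm (Q x).

Definition contractive_interpolant (H0 H K : hilbertSpace) (P : K -> K)
    (A : H -> K) (U : K -> K) (R Q : H0 -> H) (B : H -> K) : Prop :=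
  [/\ contraction B, (forall h, P (B h) = A h) & (forall x, U (B (R x)) = B (Q x))].

End HilbertDefs.

(* Write D(h) = |h|^2 - |A h|^2 for the defect form of A and L for the wandering subspace
   (K' ⊖ H') ⊖ U'(K' ⊖ H') of U'.  Let G1 : H -> L and G2 : H -> H be linear with
   |G1 h|^2 + D(G2 h) <= D(h), G1 (Q x) = (I - Π_H') U' A R x and G2 (Q x) = R x.  The spaces
   U'^n L are mutually orthogonal, so E h = Σ_n U'^n G1 (G2^n h) converges with |E h|^2 <= D(h),
   and B = A + E is a contractive interpolant: E h ⊥ H' and E (Q x) = G1 (Q x) + U' E (R x).
   As R is left invertible and R^*R <= Q^*Q, Q is bounded below and its range is closed, and a
   pair (G1, G2) is built from any D-contractive projection of H onto ran Q.

   If T' is an isometry, H' is U'-invariant, hence H' = K' by minimality and B = A is forced.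
   If ran Q is dense it is all of H, and the difference of two interpolants is orthogonal to
   every U'^n H', hence zero.  Otherwise ||A|| < 1 makes D an equivalent inner product on H;
   pick e ≠ 0 D-orthogonal to ran Q, and w ≠ 0 in L (it exists as T' is not isometric).
   Perturbing the pair of the D-orthogonal projection by h ↦ s D(h, e) (w, -z), where z
   represents y ↦ <(I - Π_H') U' A y, w> in the D-inner product and s > 0 is small, keeps the
   energy inequality but changes <B e, w> by s D(e) |w|^2 ≠ 0. *)

From HB Require Import structures.
From mathcomp Require Import all_boot all_order all_algebra.
From mathcomp Require Import reals complex ring lra boolp classical_sets.
Import Order.TTheory GRing.Theory Num.Theory.
Set Implicit Arguments. Unset Strict Implicit. Unset Printing Implicit Defensive.
Local Open Scope ring_scope.

Section RealFacts.
Variable F : realType.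

Lemma ler_addMgt0 (x y k : F) :
  0 < k -> (forall d, 0 < d -> x <= y + k * d) -> x <= y.
Proof.
move=> k0 h; apply/ler_addgt0Pr => e e0.
by have := h (e / k) (divr_gt0 e0 k0); rewrite mulrC divfK ?gt_eqF.
Qed.

Lemma eventually_invS_lt (e : F) :
  0 < e -> exists N, forall n, (N <= n)%N -> n.+1%:R^-1 < e.
Proof.
move=> e0; have ei : 0 <= e^-1 by rewrite invr_ge0 ltW.
exists (Num.bound e^-1) => n hn.
rewrite -(invrK e) ltf_pV2 ?posrE ?invr_gt0 ?ltr0Sn //.
by apply: lt_le_trans (archi_boundP ei) _; rewrite ler_nat leqW.
Qed.

Lemma nondecreasing_bounded_cauchy (s : nat -> F) (b : F) :
  (forall n, s n <= s n.+1) -> (forall n, s n <= b) ->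
  forall e, 0 < e -> exists N, forall m, (N <= m)%N -> s m - s N < e.
Proof.
move=> inc bd e e0.
pose E x := exists n, x = s n.
have hs : has_sup E by split; [exists (s 0%N); exists 0%N | exists b => _ [n ->]].
have [_ [N ->] hN] := sup_adherent e0 hs.
exists N => m hm; have : s m <= sup E by apply: sup_upper_bound => //; exists m.
lra.
Qed.

End RealFacts.

Section ComplexScalars.
Variable F : realType.
Local Notation C := (F[i]).
Local Notation Re := (@complex.Re F).
Local Notation Im := (@complex.Im F).

Definition sqmod (a : C) : F := Re a ^+ 2 + Im a ^+ 2.

Lemma complex_eq (a b : C) :
  Re a = Re b -> Im a = Im b -> a = b.
Proof. by case: a; case: b => ? ? ? ? /= -> ->. Qed.

Lemma mulcJ_sqmod (a : C) : a * conjc a = (sqmod a)%:C%C.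
Proof. by case: a => x y; apply: complex_eq; rewrite /sqmod /=; ring. Qed.

Lemma sqmod_ge0 a : 0 <= sqmod a.
Proof. by rewrite addr_ge0 // sqr_ge0. Qed.

Lemma sqmod_eq0 a : sqmod a = 0 -> a = 0.
Proof.
case: a => x y; rewrite /sqmod /= => h.
have /eqP : x ^+ 2 = 0 by have := sqr_ge0 x; have := sqr_ge0 y; lra.
have /eqP : y ^+ 2 = 0 by have := sqr_ge0 x; have := sqr_ge0 y; lra.
by rewrite !sqrf_eq0 => /eqP -> /eqP ->.
Qed.

Lemma sqmodR (x : F) : sqmod x%:C%C = x ^+ 2.
Proof. by rewrite /sqmod /= expr0n addr0. Qed.

Lemma sqmodM a b : sqmod (a * b) = sqmod a * sqmod b.
Proof. by case: a => ? ?; case: b => ? ?; rewrite /sqmod /=; ring. Qed.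

Lemma sqmodN a : sqmod (- a) = sqmod a.
Proof. by case: a => ? ?; rewrite /sqmod /= !sqrrN. Qed.

Lemma Re_conjc (a : C) : Re (conjc a) = Re a.
Proof. by case: a. Qed.

Lemma Re_realM (t : F) (a : C) : Re (t%:C%C * a) = t * Re a.
Proof. by case: a => ? ? /=; ring. Qed.

Lemma Re_conji_mul (a : C) : Re (conjc 'i%C * a) = Im a.
Proof. by case: a => ? ? /=; ring. Qed.

Lemma Re_conjc_realM (t : F) (a : C) :
  Re (conjc (t%:C%C * a) * a) = t * sqmod a.
Proof. by case: a => ? ?; rewrite /sqmod /=; ring. Qed.

End ComplexScalars.

(** * Inner products and convergence *)

Section SquaredNorm.
Variable F : realType.
Local Notation C := (F[i]).
Variables (V : lmodType C) (ip : V -> V -> C).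

Definition sqnorm x := complex.Re (ip x x).

Definition converges (u : nat -> V) (l : V) :=
  forall e, 0 < e -> exists N, forall n, (N <= n)%N -> sqnorm (u n - l) < e.

Definition cauchy_seq (u : nat -> V) :=
  forall e, 0 < e -> exists N, forall m n, (N <= m)%N -> (N <= n)%N -> sqnorm (u m - u n) < e.

Lemma sqrt_sqnorm_lt x e : 0 < e -> (Num.sqrt (sqnorm x) < e) = (sqnorm x < e ^+ 2).
Proof. by move=> e0; rewrite -(ltr_sqrt (sqnorm x) (exprn_gt0 2 e0)) sqrtr_sqr gtr0_norm. Qed.

Lemma ip_completeP : ip_complete ip <-> forall u, cauchy_seq u -> exists l, converges u l.
Proof.
split=> cpl u cu.
- have [l hl] : exists l, forall e, 0 < e -> exists N, forall n, (N <= n)%N ->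
      ip_norm ip (u n - l) < e.
    apply: cpl => e e0; have [N hN] := cu (e ^+ 2) (exprn_gt0 _ e0).
    by exists N => m n hm hn; rewrite /ip_norm sqrt_sqnorm_lt // hN.
  exists l => e e0; have se : 0 < Num.sqrt e by rewrite sqrtr_gt0.
  have [N hN] := hl _ se.
  by exists N => n /hN; rewrite /ip_norm ltr_sqrt.
- have [l hl] : exists l, converges u l.
    apply: cpl => e e0; have se : 0 < Num.sqrt e by rewrite sqrtr_gt0.
    have [N hN] := cu _ se.
    by exists N => m n hm hn; move: (hN m n hm hn); rewrite /ip_norm ltr_sqrt.
  exists l => e e0; have [N hN] := hl (e ^+ 2) (exprn_gt0 _ e0).
  by exists N => n hn; rewrite /ip_norm sqrt_sqnorm_lt // hN.
Qed.

Lemma converges_shift u l : converges u l -> converges (fun n => u n.+1) l.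
Proof. by move=> h e /h[N hN]; exists N => n hn; apply/hN/leqW. Qed.

Lemma converges_ext u v l : u =1 v -> converges u l -> converges v l.
Proof. by move=> uv h e /h[N hN]; exists N => n hn; rewrite -uv; exact: hN. Qed.

Lemma converges_addl c u l : converges u l -> converges (fun n => c + u n) (c + l).
Proof. by move=> h e /h[N hN]; exists N => n hn; rewrite opprD addrACA subrr add0r hN. Qed.

End SquaredNorm.

Section InnerProduct.
Variable F : realType.
Local Notation C := (F[i]).
Local Notation Re := (@complex.Re F).
Variable V : hilbertSpace F.
Local Notation ip := (@hs_ip F V).
Local Notation sqnorm := (sqnorm ip).
Local Notation converges := (converges ip).
Local Notation cauchy_seq := (cauchy_seq ip).

Lemma ip_linear a x y z : ip (a *: x + y) z = a * ip x z + ip y z.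
Proof. by case: (hs_ip_axioms V). Qed.

Lemma ip_conj x y : ip y x = conjc (ip x y).
Proof. by case: (hs_ip_axioms V). Qed.

Lemma ip_self_eq0 x : ip x x = 0 -> x = 0.
Proof. by case: (hs_ip_axioms V) => _ _ _; apply. Qed.

Lemma ip0l z : ip 0 z = 0.
Proof.
have := ip_linear 1 0 0 z; rewrite scaler0 addr0 mul1r.
by move/(congr1 (fun c => c - ip 0 z)); rewrite subrr addrK.
Qed.

Lemma ipDl x y z : ip (x + y) z = ip x z + ip y z.
Proof. by have := ip_linear 1 x y z; rewrite scale1r mul1r. Qed.

Lemma ipZl a x z : ip (a *: x) z = a * ip x z.
Proof. by have := ip_linear a x 0 z; rewrite !addr0 ip0l addr0. Qed.

Lemma ipNl x z : ip (- x) z = - ip x z.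
Proof. by rewrite -scaleN1r ipZl mulN1r. Qed.

Lemma ipBl x y z : ip (x - y) z = ip x z - ip y z.
Proof. by rewrite ipDl ipNl. Qed.

Lemma ip0r z : ip z 0 = 0.
Proof. by rewrite ip_conj ip0l rmorph0. Qed.

Lemma ipDr z x y : ip z (x + y) = ip z x + ip z y.
Proof. by rewrite ip_conj ipDl rmorphD /= -!ip_conj. Qed.

Lemma ipZr z a x : ip z (a *: x) = conjc a * ip z x.
Proof. by rewrite ip_conj ipZl rmorphM /= -ip_conj. Qed.

Lemma ipNr z x : ip z (- x) = - ip z x.
Proof. by rewrite ip_conj ipNl rmorphN /= -ip_conj. Qed.

Lemma ipBr z x y : ip z (x - y) = ip z x - ip z y.
Proof. by rewrite ipDr ipNr. Qed.

Lemma ip_sumr I (r : seq I) (P : pred I) (f : I -> V) z :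
  ip z (\sum_(i <- r | P i) f i) = \sum_(i <- r | P i) ip z (f i).
Proof. by elim/big_rec2: _ => [|i a b _ <-]; rewrite ?ip0r ?ipDr. Qed.

Lemma ip_self x : ip x x = (sqnorm x)%:C%C.
Proof.
by rewrite /sqnorm; case: (hs_ip_axioms V) => _ _ /(_ x) []; case: (ip x x) => a b /= ->.
Qed.

Lemma sqnorm_ge0 x : 0 <= sqnorm x.
Proof. by case: (hs_ip_axioms V) => _ _ /(_ x) []. Qed.

Lemma sqnorm_eq0 x : sqnorm x = 0 -> x = 0.
Proof. by move=> h; apply: ip_self_eq0; rewrite ip_self h. Qed.

Lemma sqnorm_gt0 x : x != 0 -> 0 < sqnorm x.
Proof.
by move=> x0; rewrite lt_def sqnorm_ge0 andbT; apply: contra x0 => /eqP/sqnorm_eq0 ->.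
Qed.

Lemma sqnorm0 : sqnorm 0 = 0.
Proof. by rewrite /sqnorm ip0l. Qed.

Lemma Re_ip_conj x y : Re (ip y x) = Re (ip x y).
Proof. by rewrite ip_conj Re_conjc. Qed.

Lemma sqnormD x y : sqnorm (x + y) = sqnorm x + sqnorm y + 2 * Re (ip x y).
Proof. by rewrite /sqnorm ipDl !ipDr !raddfD /= (Re_ip_conj y x); ring. Qed.

Lemma sqnormN x : sqnorm (- x) = sqnorm x.
Proof. by rewrite /sqnorm ipNl ipNr opprK. Qed.

Lemma sqnormB x y : sqnorm (x - y) = sqnorm x + sqnorm y - 2 * Re (ip x y).
Proof. by rewrite sqnormD sqnormN ipNr raddfN /=; ring. Qed.

Lemma sqnorm_subC x y : sqnorm (x - y) = sqnorm (y - x).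
Proof. by rewrite -sqnormN opprB. Qed.

Lemma sqnormZ a x : sqnorm (a *: x) = sqmod a * sqnorm x.
Proof.
rewrite /sqnorm ipZl ipZr mulrA mulcJ_sqmod ip_self.
by rewrite -rmorphM.
Qed.

Lemma parallelogram x y : sqnorm (x + y) + sqnorm (x - y) = 2 * sqnorm x + 2 * sqnorm y.
Proof. by rewrite sqnormD sqnormB; ring. Qed.

Lemma Re_ip_le (t : F) x y : 2 * t * Re (ip x y) <= t ^+ 2 * sqnorm x + sqnorm y.
Proof.
have := sqnorm_ge0 (t%:C%C *: x - y).
by rewrite sqnormB sqnormZ ipZl sqmodR Re_realM; lra.
Qed.

Lemma sqnormD_le (t : F) x y :
  0 < t -> sqnorm (x + y) <= (1 + t) * sqnorm x + (1 + t^-1) * sqnorm y.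
Proof.
move=> t0; have := Re_ip_le t x y; rewrite sqnormD.
have tV : t * t^-1 = 1 by rewrite mulfV // gt_eqF.
have := sqnorm_ge0 x; have := sqnorm_ge0 y.
move: (sqnorm x) (sqnorm y) (Re _) => a b r a0 b0 h.
suff : 2 * r <= t * a + t^-1 * b by lra.
rewrite -(ler_pM2l t0) mulrDr !mulrA tV mul1r -expr2; lra.
Qed.

Lemma sqnormD_le2 x y : sqnorm (x + y) <= 2 * sqnorm x + 2 * sqnorm y.
Proof. by have := sqnormD_le x y ltr01; rewrite invr1. Qed.

Lemma cauchy_schwarz x y : sqmod (ip x y) <= sqnorm x * sqnorm y.
Proof.
have [->|y0] := eqVneq y 0; first by rewrite ip0r sqnorm0 mulr0 /sqmod /= expr0n addr0.
have ypos := sqnorm_gt0 y0.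
have := sqnorm_ge0 ((sqnorm y)%:C%C *: x - ip x y *: y).
rewrite sqnormB !sqnormZ ipZl ipZr sqmodR (mulrC (conjc _)) mulcJ_sqmod.
rewrite Re_realM /= => h.
have : 0 <= sqnorm y * (sqnorm y * sqnorm x - sqmod (ip x y)) by rewrite mulrBr; lra.
by rewrite pmulr_rge0 // subr_ge0 mulrC.
Qed.

Lemma converges_unique u l1 l2 : converges u l1 -> converges u l2 -> l1 = l2.
Proof.
move=> h1 h2; apply/eqP; rewrite -subr_eq0; apply/eqP/sqnorm_eq0/eqP.
rewrite eq_le sqnorm_ge0 andbT; apply/ler_addgt0Pr => e e0; rewrite add0r.
have [N1 hN1] := h1 _ (divr_gt0 e0 (ltr0Sn _ 3)).
have [N2 hN2] := h2 _ (divr_gt0 e0 (ltr0Sn _ 3)).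
set n := maxn N1 N2.
have := sqnormD_le2 (l1 - u n) (u n - l2); rewrite addrA subrK (sqnorm_subC l1 (u n)).
have := hN1 n (leq_maxl _ _); have := hN2 n (leq_maxr _ _); lra.
Qed.

Lemma converges_linear a u v l m : converges u l -> converges v m ->
  converges (fun n => a *: u n + v n) (a *: l + m).
Proof.
move=> hu hv e e0; have k0 : 0 < 4 * (sqmod a + 1) by have := sqmod_ge0 a; lra.
have [N1 hN1] := hu _ (divr_gt0 e0 k0).
have [N2 hN2] := hv _ (divr_gt0 e0 (ltr0Sn _ 3)).
exists (maxn N1 N2) => n; rewrite geq_max => /andP[/hN1 h1 /hN2 h2].
have -> : a *: u n + v n - (a *: l + m) = a *: (u n - l) + (v n - m).
  by rewrite scalerBr opprD addrACA.
apply: le_lt_trans (sqnormD_le2 _ _) _; rewrite sqnormZ.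
have : sqmod a * sqnorm (u n - l) <= (sqmod a + 1) * (e / (4 * (sqmod a + 1))).
  by apply: ler_pM; rewrite ?sqmod_ge0 ?sqnorm_ge0 //; lra.
have -> : (sqmod a + 1) * (e / (4 * (sqmod a + 1))) = e / 4.
  by field; rewrite gt_eqF //; have := sqmod_ge0 a; lra.
lra.
Qed.

Lemma converges_const l : converges (fun=> l) l.
Proof. by move=> e e0; exists 0%N => n _; rewrite subrr sqnorm0. Qed.

Lemma converges_subl v u l : converges u l -> converges (fun n => v - u n) (v - l).
Proof.
move=> h e /h[N hN]; exists N => n hn.
by rewrite opprB addrC addrA subrK sqnorm_subC hN.
Qed.

Lemma le_sqnorm_limit u l b : converges u l ->
  (exists N, forall n, (N <= n)%N -> sqnorm (u n) <= b) -> sqnorm l <= b.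
Proof.
move=> hu [N hb]; have b0 : 0 <= b := le_trans (sqnorm_ge0 _) (hb N (leqnn N)).
apply: (@ler_addMgt0 _ _ _ (b + 1)); first lra.
move=> t t0; have tV : 0 < t^-1 by rewrite invr_gt0.
apply: (@ler_addMgt0 _ _ _ (1 + t^-1)); first lra.
move=> d /hu[N' hN']; set n := maxn N N'.
have dn := hN' n (leq_maxr _ _); rewrite sqnorm_subC in dn.
have := sqnormD_le (u n) (l - u n) t0; rewrite addrC subrK.
have := hb n (leq_maxl _ _); have := sqnorm_ge0 (l - u n); nra.
Qed.

Lemma sqnorm_sum_orth (t : nat -> V) (r : seq nat) : uniq r ->
  (forall i j, i != j -> ip (t i) (t j) = 0) ->
  sqnorm (\sum_(i <- r) t i) = \sum_(i <- r) sqnorm (t i).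
Proof.
move=> + orth; elim: r => [|a r IH] /=; first by rewrite !big_nil sqnorm0.
case/andP=> anr ur; rewrite !big_cons sqnormD IH //.
suff -> : ip (t a) (\sum_(i <- r) t i) = 0 by rewrite raddf0 mulr0 addr0.
rewrite ip_sumr big_seq big1 // => i ir.
by apply: orth; apply: contraNneq anr => ->.
Qed.

Lemma orth_series_cauchy (t : nat -> V) b :
  (forall i j, i != j -> ip (t i) (t j) = 0) ->
  (forall N, \sum_(i < N) sqnorm (t i) <= b) ->
  cauchy_seq (fun N => \sum_(i < N) t i).
Proof.
move=> orth bd e e0.
have inc n : \sum_(i < n) sqnorm (t i) <= \sum_(i < n.+1) sqnorm (t i).
  by rewrite big_ord_recr /= lerDl sqnorm_ge0.
have [N hN] := nondecreasing_bounded_cauchy inc bd e0.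
suff key m n : (N <= n)%N -> (n <= m)%N ->
    sqnorm (\sum_(i < m) t i - \sum_(i < n) t i) < e.
  exists N => m n hm hn; case: (leqP n m) => [|/ltnW] hnm; first exact: key.
  by rewrite sqnorm_subC key.
move=> hn hm; have hNm := leq_trans hn hm.
have split_sum (f : nat -> F) k : (N <= k)%N ->
    \sum_(i < k) f i = \sum_(i < N) f i + \sum_(N <= i < k) f i.
  by move=> hk; rewrite -!(big_mkord xpredT) (big_cat_nat (leq0n N) hk).
rewrite -!(big_mkord xpredT) (big_cat_nat (leq0n n) hm) /= addrAC subrr add0r.
rewrite sqnorm_sum_orth ?iota_uniq //.
have := hN m hNm; have := hN n hn; rewrite /=.
rewrite !(split_sum (fun i => sqnorm (t i)) _ hNm) (split_sum (fun i => sqnorm (t i)) _ hn).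
rewrite (big_cat_nat hn hm) /=.
have : 0 <= \sum_(N <= i < n) sqnorm (t i) by apply: sumr_ge0 => i _; exact: sqnorm_ge0.
lra.
Qed.

End InnerProduct.

(** * Orthogonal projection and Riesz representation *)

Section Projection.
Variable F : realType.
Local Notation C := (F[i]).
Variable V : hilbertSpace F.
Local Notation ip := (@hs_ip F V).
Local Notation sqnorm := (sqnorm ip).
Local Notation converges := (converges ip).

Definition seq_closed_subspace (M : V -> Prop) :=
  [/\ M 0, (forall a x y, M x -> M y -> M (a *: x + y))
    & forall u l, (forall n, M (u n)) -> converges u l -> M l].

Variable M : V -> Prop.
Hypothesis M_sub : seq_closed_subspace M.

Let M0 : M 0. Proof. by case: M_sub. Qed.
Let M_linear a x y : M x -> M y -> M (a *: x + y). Proof. by case: M_sub => _ + _; apply. Qed.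
Let MZ a x : M x -> M (a *: x). Proof. by move=> Mx; rewrite -[_ *: _]addr0; exact: M_linear. Qed.
Let MD x y : M x -> M y -> M (x + y).
Proof. by move=> Mx; rewrite -[x]scale1r; exact: M_linear. Qed.

Lemma dist_minimizing_cauchy v (d : F) (m : nat -> V) :
  (forall w, M w -> d <= sqnorm (v - w)) -> (forall n, M (m n)) ->
  (forall n, sqnorm (v - m n) < d + n.+1%:R^-1) -> cauchy_seq ip m.
Proof.
move=> dmin Mm mlt e e0; have [N hN] := eventually_invS_lt (divr_gt0 e0 (ltr0Sn _ 3)).
exists N => i j hi hj.
have mid : d <= sqnorm (v - 2^-1 *: (m i + m j)) by apply/dmin/MZ/MD.
have sum_mid : v - m i + (v - m j) = 2 *: (v - 2^-1 *: (m i + m j)).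
  by rewrite scalerBr scalerA mulfV ?pnatr_eq0 // scale1r scaler_nat mulr2n opprD addrACA.
have sq2 : sqmod (2 : C) = 4 by rewrite /sqmod /=; ring.
have := parallelogram (v - m i) (v - m j).
have -> : v - m i - (v - m j) = m j - m i by rewrite opprB addrC addrA subrK.
rewrite sum_mid sqnormZ sq2 (sqnorm_subC (m j)).
have := mlt i; have := mlt j; have := hN i hi; have := hN j hj.
move: i.+1%:R^-1 j.+1%:R^-1 => a b; lra.
Qed.

Lemma dist_minimizer_orth v p :
  M p -> (forall w, M w -> sqnorm (v - p) <= sqnorm (v - w)) ->
  forall w, M w -> ip (v - p) w = 0.
Proof.
move=> Mp pmin w Mw; set z := v - p; set a := ip z w.
have key s : 0 < s -> 2 * s * sqmod a <= s ^+ 2 * sqmod a * sqnorm w.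
  move=> s0; have := pmin _ (MD Mp (MZ (s%:C%C * a) Mw)).
  rewrite opprD addrA -/z (sqnormB z) sqnormZ ipZr -/a Re_conjc_realM sqmodM sqmodR.
  lra.
have w0 := sqnorm_ge0 w; have a0 := sqmod_ge0 a.
pose s := (sqnorm w + 1)^-1.
have s0 : 0 < s by rewrite invr_gt0; lra.
have s1 : s * (sqnorm w + 1) = 1 by rewrite mulVf // gt_eqF //; lra.
have sw : s * sqnorm w = 1 - s by rewrite -s1; ring.
have := key s s0.
have -> : s ^+ 2 * sqmod a * sqnorm w = s * (1 - s) * sqmod a by rewrite -sw; ring.
move=> h; apply: sqmod_eq0; apply/eqP; rewrite eq_le a0 andbT.
have : sqmod a * (s * (1 + s)) <= 0 by nra.
by rewrite pmulr_lle0 // mulr_gt0 //; lra.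
Qed.

Theorem orth_proj_exists v : exists p, M p /\ forall w, M w -> ip (v - p) w = 0.
Proof.
pose D r := exists2 w, M w & r = sqnorm (v - w).
have lbD : has_lbound D by exists 0 => _ [w _ ->]; exact: sqnorm_ge0.
have infD : has_inf D by split=> //; exists (sqnorm (v - 0)), 0.
set d := inf D.
have dmin w : M w -> d <= sqnorm (v - w) by move=> Mw; apply: ge_inf => //; exists w.
have /choice[m hm] : forall n, exists w, M w /\ sqnorm (v - w) < d + n.+1%:R^-1.
  move=> n; have n0 : 0 < n.+1%:R^-1 :> F by rewrite invr_gt0.
  by have [_ [w Mw ->] hw] := inf_adherent n0 infD; exists w.
have [p mp] := (ip_completeP ip).1 (@hs_complete F V) _
  (dist_minimizing_cauchy dmin (fun n => (hm n).1) (fun n => (hm n).2)).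
have Mp : M p by case: M_sub => _ _; apply; [exact: (fun n => (hm n).1) | exact: mp].
have vmp := converges_subl v mp.
have dp : sqnorm (v - p) <= d.
  apply/ler_addgt0Pr => e /eventually_invS_lt[N hN].
  apply: le_sqnorm_limit vmp _; exists N => n /hN.
  by have := (hm n).2; move: n.+1%:R^-1 => r; lra.
exists p; split=> //; apply: dist_minimizer_orth => // w /dmin; exact: le_trans.
Qed.

End Projection.

Section Riesz.
Variable F : realType.
Local Notation C := (F[i]).
Variable V : hilbertSpace F.
Local Notation ip := (@hs_ip F V).
Local Notation sqnorm := (sqnorm ip).
Variables (g : V -> C) (c : F).
Hypothesis g_linear : forall a x y, g (a *: x + y) = a * g x + g y.
Hypothesis g_bounded : forall x, sqmod (g x) <= c * sqnorm x.

Let g0 : g 0 = 0.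
Proof.
have := g_linear 1 0 0; rewrite scaler0 addr0 mul1r.
by move/(congr1 (fun c => c - g 0)); rewrite subrr addrK.
Qed.
Let gB x y : g (x - y) = g x - g y.
Proof. by rewrite -scaleN1r addrC g_linear mulN1r addrC. Qed.

Lemma kernel_seq_closed : seq_closed_subspace (fun x : V => g x = 0).
Proof.
split=> // [a x y gx gy|u l gu ul]; first by rewrite g_linear gx gy mulr0 addr0.
apply: sqmod_eq0; apply/eqP; rewrite eq_le sqmod_ge0 andbT.
apply: (@ler_addMgt0 _ _ _ (`|c| + 1)); first by have := normr_ge0 c; lra.
move=> d /ul[N hN]; have dN := hN N (leqnn N).
have -> : g l = - g (u N - l) by rewrite gB gu sub0r opprK.
rewrite sqmodN; apply: le_trans (g_bounded _) _.
have := sqnorm_ge0 (u N - l); have := ler_norm c; have := normr_ge0 c; nra.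
Qed.

Theorem riesz_representation : exists z, forall y, g y = ip y z.
Proof.
have [g_eq0|/existsNP[y0 gy0]] := pselect (forall y, g y = 0).
  by exists 0 => y; rewrite g_eq0 ip0r.
have [p [gp p_orth]] := orth_proj_exists kernel_seq_closed y0.
set z0 := y0 - p.
have gz0 : g z0 != 0 by rewrite gB gp subr0; apply/eqP.
have nz0 : (sqnorm z0)%:C%C != 0 :> C.
  rewrite (inj_eq (@complexI _)); apply: contra gz0 => /eqP/sqnorm_eq0 ->.
  by rewrite g0.
have rep y : ip y z0 = g y / g z0 * (sqnorm z0)%:C%C.
  have gw : g (y - (g y / g z0) *: z0) = 0.
    by rewrite gB -[_ *: z0]addr0 g_linear g0 addr0 mulfVK ?subrr.
  have := p_orth _ gw; rewrite ip_conj => /(congr1 conjc); rewrite conjcK conjc0.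
  by rewrite ipBl ipZl ip_self => /eqP; rewrite subr_eq0 => /eqP.
exists (conjc (g z0 / (sqnorm z0)%:C%C) *: z0) => y.
rewrite ipZr conjcK rep.
by field; rewrite gz0 nz0.
Qed.

End Riesz.

(** * Bounded operators *)

Lemma hnorm_sqr (F : realType) (V : hilbertSpace F) (x : V) :
  hnorm x ^+ 2 = sqnorm (@hs_ip F V) x.
Proof. by rewrite /hnorm /ip_norm sqr_sqrtr // sqnorm_ge0. Qed.

Lemma orth_dense_eq0 (F : realType) (V : hilbertSpace F) (S : V -> Prop) (x : V) :
  (forall k, hclosure S k) -> (forall s, S s -> hs_ip x s = 0) -> x = 0.
Proof.
move=> S_dense x_orth; apply/sqnorm_eq0/eqP; rewrite eq_le sqnorm_ge0 andbT.
apply/ler_addgt0Pr => e e0; rewrite add0r.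
have se : 0 < Num.sqrt e by rewrite sqrtr_gt0.
have [s [Ss xs]] := S_dense x _ se.
have : sqnorm (@hs_ip F V) (x - s) < e.
  by rewrite -hnorm_sqr -(sqr_sqrtr (ltW e0)) ltr_sqr ?nnegrE ?sqrtr_ge0.
have := Re_ip_le 1 x (x - s); rewrite ipBr (x_orth s Ss) subr0 expr1n !mul1r mulr1.
rewrite -/(sqnorm _ x); lra.
Qed.

Section Operators.
Variable F : realType.
Local Notation C := (F[i]).
Variables (V W : hilbertSpace F).
Local Notation sqnormV := (sqnorm (@hs_ip F V)).
Local Notation sqnormW := (sqnorm (@hs_ip F W)).

Lemma ler_hnorm (x : V) (y : W) : (hnorm x <= hnorm y) = (sqnormV x <= sqnormW y).
Proof. by rewrite -!hnorm_sqr ler_sqr // nnegrE sqrtr_ge0. Qed.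

Lemma hnorm_eq_sqnorm (x : V) (y : W) : hnorm x = hnorm y -> sqnormV x = sqnormW y.
Proof. by rewrite -!hnorm_sqr => ->. Qed.

Lemma sqnorm_le_of_hnorm (f : V -> W) (c : F) :
  (forall x, hnorm (f x) <= c * hnorm x) -> forall x, sqnormW (f x) <= c ^+ 2 * sqnormV x.
Proof.
move=> hf x; rewrite -!hnorm_sqr -exprMn.
have := hf x; have := sqrtr_ge0 (sqnormW (f x)); have := sqrtr_ge0 (sqnormV x).
rewrite /hnorm /ip_norm -/(sqnorm _ _) => sa sb h.
have [c0|c0] := leP 0 c; first by rewrite ler_sqr ?nnegrE // mulr_ge0.
rewrite (_ : Num.sqrt _ = 0) ?expr0n ?sqr_ge0 //.
by apply/eqP; rewrite eq_le sb andbT; nra.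
Qed.

Section Linear.
Variable f : V -> W.
Hypothesis f_linear : is_linear f.

Lemma is_linear0 : f 0 = 0.
Proof.
have := f_linear 1 0 0; rewrite scaler0 addr0 scale1r.
by move/(congr1 (fun w => w - f 0)); rewrite subrr addrK.
Qed.

Lemma is_linearD x y : f (x + y) = f x + f y.
Proof. by have := f_linear 1 x y; rewrite !scale1r. Qed.

Lemma is_linearZ a x : f (a *: x) = a *: f x.
Proof. by have := f_linear a x 0; rewrite !addr0 is_linear0 addr0. Qed.

Lemma is_linearB x y : f (x - y) = f x - f y.
Proof. by rewrite -scaleN1r addrC f_linear scaleN1r addrC. Qed.

Lemma is_linear_sum I (r : seq I) (P : pred I) (g : I -> V) :
  f (\sum_(i <- r | P i) g i) = \sum_(i <- r | P i) f (g i).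
Proof. by elim/big_rec2: _ => [|i a b _ <-]; rewrite ?is_linear0 ?is_linearD. Qed.

Lemma converges_linear_bounded (c : F) u l :
  (forall x, sqnormW (f x) <= c * sqnormV x) ->
  converges (@hs_ip F V) u l -> converges (@hs_ip F W) (fun n => f (u n)) (f l).
Proof.
move=> fb ul e e0; have k0 : 0 < `|c| + 1 by have := normr_ge0 c; lra.
have [N hN] := ul _ (divr_gt0 e0 k0); exists N => n /hN.
rewrite -is_linearB ltr_pdivlMr // => h; apply: le_lt_trans (fb _) _.
have := sqnorm_ge0 (u n - l); have := ler_norm c; have := normr_ge0 c; nra.
Qed.

Lemma isometry_ip : (forall x, sqnormW (f x) = sqnormV x) ->
  forall x y, hs_ip (f x) (f y) = hs_ip x y.
Proof.
move=> fiso.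
have Re_ip x y : complex.Re (hs_ip (f x) (f y)) = complex.Re (hs_ip x y).
  by have := fiso (x + y); rewrite is_linearD !sqnormD !fiso; lra.
move=> x y; apply: complex_eq; first exact: Re_ip.
rewrite -!Re_conji_mul -!ipZr.
by rewrite -is_linearZ Re_ip.
Qed.

End Linear.

Lemma is_linear_comp (X : hilbertSpace F) (f : W -> X) (g : V -> W) :
  is_linear f -> is_linear g -> is_linear (fun x => f (g x)).
Proof. by move=> hf hg a x y; rewrite hg hf. Qed.

Lemma is_linear_add_scaled (f : V -> W) (t : V -> C) (v : W) :
  is_linear f -> (forall a x y, t (a *: x + y) = a * t x + t y) ->
  is_linear (fun x => f x + t x *: v).
Proof. by move=> hf ht a x y; rewrite hf ht scalerDl -scalerA scalerDr addrACA. Qed.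

End Operators.

Lemma is_linear_iter (F : realType) (V : hilbertSpace F) (f : V -> V) n :
  is_linear f -> is_linear (iter n f).
Proof. by move=> hf; elim: n => [|n IH] a x y //=; rewrite IH hf. Qed.

Section OrthProj.
Variable F : realType.
Variable V : hilbertSpace F.
Local Notation ip := (@hs_ip F V).
Local Notation sqnorm := (sqnorm ip).
Variables (M : V -> Prop) (Pm : V -> V).
Hypothesis M0 : M 0.
Hypothesis M_linear : forall a x y, M x -> M y -> M (a *: x + y).
Hypothesis Pm_proj : orth_proj M Pm.

Lemma orth_proj_in v : M (Pm v). Proof. by case: (Pm_proj v). Qed.

Lemma orth_proj_orth v x : M x -> ip (v - Pm v) x = 0.
Proof. by case: (Pm_proj v) => _; apply. Qed.

Let MB x y : M x -> M y -> M (x - y).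
Proof.
move=> Mx My; rewrite -[x]scale1r -[y]scale1r -scaleNr -[_ *: y]addr0.
by apply: M_linear => //; apply: M_linear.
Qed.

Let orth_eq0 x : M x -> (forall y, M y -> ip x y = 0) -> x = 0.
Proof. by move=> Mx /(_ x Mx)/ip_self_eq0. Qed.

Lemma orth_proj_id m : M m -> Pm m = m.
Proof.
move=> Mm; apply/eqP; rewrite eq_sym -subr_eq0; apply/eqP.
by apply: orth_eq0 (orth_proj_orth m); exact: MB (orth_proj_in m).
Qed.

Lemma orth_proj_ip v m : M m -> ip (Pm v) m = ip v m.
Proof. by move/(orth_proj_orth v)/eqP; rewrite ipBl subr_eq0 eq_sym => /eqP. Qed.

Lemma orth_proj_linear : is_linear Pm.
Proof.
move=> a x y; apply/eqP; rewrite -subr_eq0; apply/eqP/orth_eq0 => [|m Mm].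
  by apply: MB; [exact: orth_proj_in | apply: M_linear; exact: orth_proj_in].
by rewrite ipBl ipDl ipZl !orth_proj_ip // ip_linear subrr.
Qed.

Lemma orth_proj_pythagoras v : sqnorm v = sqnorm (Pm v) + sqnorm (v - Pm v).
Proof.
rewrite -{1}(subrK (Pm v) v) (sqnormD (v - Pm v)) orth_proj_orth; last exact: orth_proj_in.
by rewrite /= mulr0 addr0 addrC.
Qed.

Lemma orth_proj_sqnorm_le v : sqnorm (Pm v) <= sqnorm v.
Proof. by rewrite [leRHS]orth_proj_pythagoras lerDl sqnorm_ge0. Qed.

Lemma orth_proj_residual_le v : sqnorm (v - Pm v) <= sqnorm v.
Proof. by rewrite [leRHS]orth_proj_pythagoras lerDr sqnorm_ge0. Qed.

End OrthProj.

(** * Interpolants of a relaxed commutant lifting data set *)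

Section RelaxedCommutantLifting.
Variable F : realType.
Local Notation C := (F[i]).
Variables (H0 H K : hilbertSpace F) (H' : K -> Prop) (P : K -> K) (A : H -> K)
  (T U : K -> K) (R Q : H0 -> H).
Hypothesis H'_closed : closed_subspace H'.
Hypothesis P_proj : orth_proj H' P.
Hypothesis A_contr : contraction A.
Hypothesis A_range : forall h, H' (A h).
Hypothesis T_contr : contraction_on H' T.
Hypothesis U_lifting : minimal_isometric_lifting H' P T U.
Hypothesis R_bounded : bounded_op R.
Hypothesis Q_bounded : bounded_op Q.
Hypothesis TAR_AQ : forall x, T (A (R x)) = A (Q x).
Hypothesis RQ_le : op_le_sq R Q.
Hypothesis R_left_inv : left_invertible R.

Local Notation ipK := (@hs_ip F K).
Local Notation nK := (sqnorm (@hs_ip F K)).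
Local Notation nH := (sqnorm (@hs_ip F H)).
Local Notation nH0 := (sqnorm (@hs_ip F H0)).

Let H'0 : H' 0. Proof. by case: H'_closed. Qed.
Let H'_linear a x y : H' x -> H' y -> H' (a *: x + y).
Proof. by case: H'_closed => _ + _; apply. Qed.

Let P_in := orth_proj_in P_proj.
Let P_id := orth_proj_id H'0 H'_linear P_proj.
Let P_linear := orth_proj_linear H'0 H'_linear P_proj.

Lemma ker_P_orth z k : P z = 0 -> H' k -> ipK z k = 0.
Proof. by move=> Pz /(orth_proj_orth P_proj z); rewrite Pz subr0. Qed.

Let A_linear : is_linear A. Proof. by case: A_contr => -[]. Qed.
Let R_linear : is_linear R. Proof. by case: R_bounded. Qed.
Let Q_linear : is_linear Q. Proof. by case: Q_bounded. Qed.
Let U_linear : is_linear U. Proof. by case: U_lifting => -[[]]. Qed.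
Let PU k : P (U k) = T (P k). Proof. by case: U_lifting. Qed.

Lemma U_sqnorm k : nK (U k) = nK k.
Proof. by case: U_lifting => -[_ Uiso] _ _; exact/hnorm_eq_sqnorm. Qed.

Lemma U_ip x y : ipK (U x) (U y) = ipK x y.
Proof. exact: isometry_ip U_linear U_sqnorm x y. Qed.

Lemma T0 : T 0 = 0.
Proof.
case: T_contr => _ T_lin _; have := T_lin 1 0 0 H'0 H'0.
rewrite scaler0 addr0 scale1r => /(congr1 (fun k => k - T 0)).
by rewrite subrr addrK.
Qed.

Lemma ker_P_iterU z n : P z = 0 -> P (iter n U z) = 0.
Proof. by move=> Pz; elim: n => //= n IH; rewrite PU IH T0. Qed.

(* [v] lies in the wandering subspace (K' ⊖ H') ⊖ U'(K' ⊖ H') of U'. *)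
Definition wandering v := P v = 0 /\ forall z, P z = 0 -> ipK v (U z) = 0.

Lemma iterU_ip n x y : ipK (iter n U x) (iter n U y) = ipK x y.
Proof. by elim: n => //= n IH; rewrite U_ip. Qed.

Lemma wandering_iter_orth v w n m : wandering v -> wandering w -> n != m ->
  ipK (iter n U v) (iter m U w) = 0.
Proof.
have lt_orth v' w' n' m' : wandering v' -> wandering w' -> (n' < m')%N ->
    ipK (iter n' U v') (iter m' U w') = 0.
  move=> [_ v_orth] [Pw _] /subnKC <-.
  by rewrite iterD iterSr iterU_ip v_orth // ker_P_iterU.
move=> Lv Lw; case: ltngtP => // [nm|mn] _; first exact: lt_orth.
by rewrite ip_conj lt_orth // rmorph0.
Qed.

Lemma wandering0 : wandering 0.
Proof. by split=> [|z _]; [exact: P_id | rewrite ip0l]. Qed.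

Lemma wandering_linear a v w : wandering v -> wandering w -> wandering (a *: v + w).
Proof.
move=> [Pv v_orth] [Pw w_orth]; split; first by rewrite P_linear Pv Pw scaler0 addr0.
by move=> z Pz; rewrite ip_linear v_orth // w_orth // mulr0 addr0.
Qed.

Lemma wandering_residual k : H' k -> wandering (U k - P (U k)).
Proof.
move=> Hk; split; first by rewrite (is_linearB P_linear) (P_id (P_in _)) subrr.
move=> z Pz; have PUz : P (U z) = 0 by rewrite PU Pz T0.
by rewrite ipBl U_ip (ip_conj z) (ip_conj (U z)) !ker_P_orth ?rmorph0 ?subrr.
Qed.

Definition defect h := nH h - nK (A h).

Lemma defect_ge0 h : 0 <= defect h.
Proof. by case: A_contr => _ /(_ h); rewrite ler_hnorm subr_ge0. Qed.

Section LiftingSeries.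
Variables (G1 : H -> K) (G2 : H -> H).
Hypothesis G1_linear : is_linear G1.
Hypothesis G2_linear : is_linear G2.
Hypothesis G1_wandering : forall h, wandering (G1 h).
Hypothesis G_energy : forall h, nK (G1 h) + defect (G2 h) <= defect h.

Definition lift_term h n := iter n U (G1 (iter n G2 h)).
Definition lift_partial h N := \sum_(i < N) lift_term h i.
Definition lift_defect h := xget 0 (converges ipK (lift_partial h)).

Lemma lift_term_orth h i j : i != j -> ipK (lift_term h i) (lift_term h j) = 0.
Proof. exact: wandering_iter_orth. Qed.

Lemma lift_term_sqnorm h n : nK (lift_term h n) = nK (G1 (iter n G2 h)).
Proof. by rewrite /lift_term; elim: n (G1 _) => //= n IH k; rewrite U_sqnorm IH. Qed.

Lemma lift_energy_sum h N :
  \sum_(i < N) nK (lift_term h i) <= defect h - defect (iter N G2 h).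
Proof.
elim: N => [|N IH]; first by rewrite big_ord0 subrr.
by rewrite big_ord_recr /= lift_term_sqnorm; have := G_energy (iter N G2 h); lra.
Qed.

Lemma lift_partial_sqnorm_le h N : nK (lift_partial h N) <= defect h.
Proof.
rewrite /lift_partial -(big_mkord xpredT (lift_term h)).
rewrite sqnorm_sum_orth ?iota_uniq ?big_mkord //; last exact: lift_term_orth.
by apply: le_trans (lift_energy_sum h N) _; rewrite gerBl defect_ge0.
Qed.

Lemma lift_defect_converges h : converges ipK (lift_partial h) (lift_defect h).
Proof.
apply: xgetPex; apply: (ip_completeP _).1 (@hs_complete F K) _ _.
apply: (orth_series_cauchy (b := defect h)); first exact: lift_term_orth.
by move=> N; apply: le_trans (lift_energy_sum h N) _; rewrite gerBl defect_ge0.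
Qed.

Lemma lift_defect_sqnorm_le h : nK (lift_defect h) <= defect h.
Proof.
apply: le_sqnorm_limit (lift_defect_converges h) _.
by exists 0%N => N _; exact: lift_partial_sqnorm_le.
Qed.

Lemma lift_defect_linear : is_linear lift_defect.
Proof.
move=> a x y; apply: converges_unique (lift_defect_converges _) _.
apply: converges_ext (converges_linear a (lift_defect_converges x) (lift_defect_converges y)).
move=> N; rewrite /lift_partial scaler_sumr -big_split /=; apply: eq_bigr => i _.
by rewrite /lift_term (is_linear_iter _ G2_linear) G1_linear (is_linear_iter _ U_linear).
Qed.

Lemma lift_partialS h N : lift_partial h N.+1 = G1 h + U (lift_partial (G2 h) N).
Proof.
rewrite /lift_partial big_ord_recl (is_linear_sum U_linear); congr (_ + _).
by apply: eq_bigr => i _; rewrite /lift_term /= -iterSr -iterS.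
Qed.

Lemma lift_defect_rec h : lift_defect h = G1 h + U (lift_defect (G2 h)).
Proof.
apply: converges_unique (converges_shift (lift_defect_converges h)) _.
have Ub k : nK (U k) <= 1 * nK k by rewrite U_sqnorm mul1r.
have := converges_linear_bounded U_linear Ub (lift_defect_converges (G2 h)).
move/(converges_addl (G1 h)); apply: converges_ext => N.
by rewrite lift_partialS.
Qed.

Lemma P_lift_defect h : P (lift_defect h) = 0.
Proof.
have Pb k : nK (P k) <= 1 * nK k by rewrite mul1r; exact: orth_proj_sqnorm_le P_proj k.
apply: converges_unique (converges_linear_bounded P_linear Pb (lift_defect_converges h)) _.
apply: (converges_ext _ (converges_const (0 : K))) => N.
rewrite /lift_partial (is_linear_sum P_linear) big1 // => i _.
by rewrite /lift_term ker_P_iterU //; case: (G1_wandering (iter i G2 h)).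
Qed.

Lemma lift_defect_ip_wandering h w : wandering w -> ipK (lift_defect h) w = ipK (G1 h) w.
Proof.
case=> _ w_orth; rewrite lift_defect_rec ipDl (ip_conj w (U _)) w_orth ?P_lift_defect //.
by rewrite rmorph0 addr0.
Qed.

Definition lift_interpolant h := A h + lift_defect h.

Hypothesis G1_Q : forall x, G1 (Q x) = U (A (R x)) - P (U (A (R x))).
Hypothesis G2_Q : forall x, G2 (Q x) = R x.

Lemma lift_interpolant_sqnorm_le h : nK (lift_interpolant h) <= nH h.
Proof.
have := lift_defect_sqnorm_le h; rewrite /lift_interpolant sqnormD.
by rewrite (ip_conj (lift_defect h)) ker_P_orth ?P_lift_defect // rmorph0 /defect /=; lra.
Qed.

Lemma lift_interpolantP : contractive_interpolant P A U R Q lift_interpolant.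
Proof.
split.
- have Bc h : hnorm (lift_interpolant h) <= hnorm h.
    by rewrite ler_hnorm lift_interpolant_sqnorm_le.
  split=> //; split; last by exists 1 => h; rewrite mul1r.
  by move=> a x y; rewrite /lift_interpolant A_linear lift_defect_linear addrACA scalerDr.
- by move=> h; rewrite /lift_interpolant (is_linearD P_linear) P_id // P_lift_defect addr0.
- move=> x; rewrite /lift_interpolant (lift_defect_rec (Q x)) G1_Q G2_Q (is_linearD U_linear).
  by rewrite PU P_id // TAR_AQ addrA subrKC.
Qed.

End LiftingSeries.

Lemma Q_bounded_below : exists c, 0 <= c /\ forall x, nH0 x <= c * nH (Q x).
Proof.
case: R_left_inv => D [[_ [c hc]] DR]; exists (c ^+ 2); split; first exact: sqr_ge0.
move=> x; have := sqnorm_le_of_hnorm hc (R x); rewrite DR => /le_trans; apply.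
by apply: ler_wpM2l; [exact: sqr_ge0 | rewrite -ler_hnorm].
Qed.

Lemma Q_inj : injective Q.
Proof.
move=> x y Qxy; have [c [_ hc]] := Q_bounded_below; apply/eqP; rewrite -subr_eq0.
apply/eqP/sqnorm_eq0/eqP; rewrite eq_le sqnorm_ge0 andbT.
by have := hc (x - y); rewrite (is_linearB Q_linear) Qxy subrr sqnorm0 mulr0.
Qed.

Lemma Q_range_closed (u : nat -> H0) l :
  converges (@hs_ip F H) (fun n => Q (u n)) l -> exists x, Q x = l.
Proof.
move=> Qul; have [c [c0 hc]] := Q_bounded_below.
have u_cauchy : cauchy_seq (@hs_ip F H0) u.
  move=> e e0; have k0 : 0 < 4 * (c + 1) by lra.
  have [N hN] := Qul _ (divr_gt0 e0 k0); exists N => m n /hN hm /hN hn.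
  apply: le_lt_trans (hc _) _; rewrite (is_linearB Q_linear).
  rewrite -(subrK l (Q (u m))) -addrA -opprB.
  apply: le_lt_trans (ler_wpM2l c0 (sqnormD_le2 _ _)) _; rewrite sqnormN.
  have : c * (e / (4 * (c + 1))) <= e / 4.
    have -> : c * (e / (4 * (c + 1))) = e / 4 - e / (4 * (c + 1)).
      by field; rewrite gt_eqF //; lra.
    by rewrite gerBl ltW // divr_gt0.
  have := sqnorm_ge0 (Q (u m) - l); have := sqnorm_ge0 (Q (u n) - l).
  rewrite !(sqnorm_subC l); move: (e / (4 * (c + 1))) hm hn => d; nra.
have [x ux] := (ip_completeP _).1 (@hs_complete F H0) _ u_cauchy.
have [_ [cQ cQb]] := Q_bounded; exists x.
exact: converges_unique (converges_linear_bounded Q_linear (sqnorm_le_of_hnorm cQb) ux) Qul.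
Qed.

Definition Q_inv h : H0 := xget 0 (fun x => Q x = h).

Lemma Q_invK : cancel Q Q_inv.
Proof. by move=> x; apply: Q_inj; apply: (xgetPex 0 (P := fun y => Q y = Q x)); exists x. Qed.

Section ProjectionChoice.
Variable Pm : H -> H.
Hypothesis Pm_linear : is_linear Pm.
Hypothesis Pm_range : forall h, exists x, Q x = Pm h.
Hypothesis Pm_Q : forall x, Pm (Q x) = Q x.
Hypothesis Pm_defect : forall h, defect (Pm h) <= defect h.

Let Q_inv_Pm h : Q (Q_inv (Pm h)) = Pm h.
Proof. by have [x <-] := Pm_range h; rewrite Q_invK. Qed.

Definition proj_G2 h := R (Q_inv (Pm h)).
Definition proj_G1 h := U (A (proj_G2 h)) - P (U (A (proj_G2 h))).

Lemma proj_G2_linear : is_linear proj_G2.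
Proof.
apply: is_linear_comp R_linear _ => a x y; apply: Q_inj.
by rewrite Q_linear !Q_inv_Pm Pm_linear.
Qed.

Lemma proj_G1_linear : is_linear proj_G1.
Proof.
have UP_linear : is_linear (fun k => U k - P (U k)).
  by move=> a x y; rewrite U_linear P_linear scalerBr opprD addrACA.
by apply: is_linear_comp UP_linear _; apply: is_linear_comp A_linear proj_G2_linear.
Qed.

Lemma proj_G1_wandering h : wandering (proj_G1 h).
Proof. exact: wandering_residual. Qed.

(* Pythagoras for U' A R x, with Π_H' U' A R x = T' A R x = A Q x and |R x| <= |Q x|. *)
Lemma proj_G_energy_Pm h : nK (proj_G1 h) + defect (proj_G2 h) <= defect (Pm h).
Proof.
rewrite /proj_G1 /proj_G2; have [x <-] := Pm_range h; rewrite Q_invK.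
have := orth_proj_pythagoras P_proj (U (A (R x))).
rewrite U_sqnorm PU P_id // TAR_AQ /defect.
by have := RQ_le x; rewrite ler_hnorm; lra.
Qed.

Lemma proj_G_energy h : nK (proj_G1 h) + defect (proj_G2 h) <= defect h.
Proof. exact: le_trans (proj_G_energy_Pm h) (Pm_defect h). Qed.

Lemma proj_G1_Q x : proj_G1 (Q x) = U (A (R x)) - P (U (A (R x))).
Proof. by rewrite /proj_G1 /proj_G2 Pm_Q Q_invK. Qed.

Lemma proj_G2_Q x : proj_G2 (Q x) = R x.
Proof. by rewrite /proj_G2 Pm_Q Q_invK. Qed.

Lemma proj_interpolantP :
  contractive_interpolant P A U R Q (lift_interpolant proj_G1 proj_G2).
Proof.
apply: lift_interpolantP; [exact: proj_G1_linear | exact: proj_G2_linear |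
  exact: proj_G1_wandering | exact: proj_G_energy | exact: proj_G1_Q | exact: proj_G2_Q].
Qed.

End ProjectionChoice.

Definition unique_interpolant :=
  exists B, contractive_interpolant P A U R Q B /\
    forall B', contractive_interpolant P A U R Q B' -> B' = B.

Lemma H'_iterU_span k :
  (forall h, H' h -> H' (U h)) ->
  lin_span (fun y => exists n h, H' h /\ y = iter n U h) k -> H' k.
Proof.
move=> UH' [n [a [w [hw ->]]]]; apply: big_ind => // [x y Hx Hy|i _].
  by rewrite -[x]scale1r; exact: H'_linear.
have [m [h [Hh ->]]] := hw i; rewrite -[_ *: _]addr0; apply: H'_linear => //.
by elim: m => //= m IH; exact: UH'.
Qed.

Lemma isometry_on_H'_full : isometry_on H' T -> forall k, H' k.
Proof.
move=> Tiso; have UH' h : H' h -> H' (U h).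
  move=> Hh; have := orth_proj_pythagoras P_proj (U h).
  rewrite U_sqnorm PU P_id // (hnorm_eq_sqnorm (Tiso h Hh)) => e.
  have /eqP : U h - T h = 0 by apply: sqnorm_eq0; lra.
  by rewrite subr_eq0 => /eqP ->; case: T_contr => + _ _; apply.
case: H'_closed => _ _ H'cl; case: U_lifting => _ _ span k; apply: H'cl => e /(span k)[x [Sx xk]].
by exists x; split=> //; exact: H'_iterU_span Sx.
Qed.

Lemma unique_interpolant_of_isometry : isometry_on H' T -> unique_interpolant.
Proof.
move=> /isometry_on_H'_full H'_full; exists A; split.
  split=> //; first by move=> h; rewrite P_id.
  by move=> x; rewrite -(P_id (H'_full (U _))) PU P_id.
by move=> B' [_ PB' _]; apply: funext => h; rewrite -PB' P_id.
Qed.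

Lemma Q_surj_of_dense :
  (forall h, hclosure (fun y => exists x, y = Q x) h) -> forall h, exists x, Q x = h.
Proof.
move=> Q_dense h.
have /choice[u hu] n : exists x, nH (Q x - h) < n.+1%:R^-1.
  have n0 : 0 < n.+1%:R^-1 :> F by rewrite invr_gt0.
  have sn : 0 < Num.sqrt (n.+1%:R^-1 : F) by rewrite sqrtr_gt0.
  have [_ [[x ->] hx]] := Q_dense h _ sn; exists x.
  by move: hx; rewrite sqnorm_subC /hnorm /ip_norm ltr_sqrt.
apply: (@Q_range_closed u) => e /eventually_invS_lt[N hN]; exists N => n /hN.
by have := hu n; move: n.+1%:R^-1 => r; lra.
Qed.

Lemma unique_interpolant_of_dense :
  (forall h, hclosure (fun y => exists x, y = Q x) h) -> unique_interpolant.
Proof.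
move=> /Q_surj_of_dense Q_surj.
have B0P := @proj_interpolantP id (fun _ _ _ => erefl) Q_surj (fun _ => erefl) (fun _ => lexx _).
exists (lift_interpolant (proj_G1 id) (proj_G2 id)); split=> // B' B'P.
set B0 := lift_interpolant _ _ in B0P *.
case: B'P B0P => [_ PB' QB'] [_ PB0 QB0]; apply/funext => h; apply/eqP.
rewrite -subr_eq0; apply/eqP; move: h.
pose D h := B' h - B0 h.
have PD h : P (D h) = 0 by rewrite (is_linearB P_linear) PB' PB0 subrr.
have DQ x : D (Q x) = U (D (R x)) by rewrite /D (is_linearB U_linear) QB' QB0.
have D_orth j h k : H' k -> ipK (D h) (iter j U k) = 0.
  elim: j h => [|j IH] h Hk; first exact: ker_P_orth.
  by have [x <-] := Q_surj h; rewrite DQ /= U_ip IH.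
move=> h; case: U_lifting => _ _ span; apply: orth_dense_eq0 span _ => _ [n [a [w [Sw ->]]]].
rewrite ip_sumr big1 // => i _; have [m [k [Hk ->]]] := Sw i.
by rewrite ipZr D_orth // mulr0.
Qed.

Lemma exists_wandering_vector : ~ isometry_on H' T -> exists w, wandering w /\ 0 < nK w.
Proof.
move=> /existsNP[k /not_implyP[Hk Tk]]; exists (U k - P (U k)).
split; first exact: wandering_residual.
apply: sqnorm_gt0; apply: contra_notN Tk; rewrite subr_eq0 PU P_id // => /eqP <-.
by case: U_lifting => -[_ ->].
Qed.

Section StrictContraction.
Hypothesis A_strict : strict_contraction A.

Lemma defect_lower_bound : exists k, 0 < k /\ forall h, k * nH h <= defect h.
Proof.
case: A_strict => _ [c [c1 hc]]; set c' := Num.max c 0.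
have hc' h : hnorm (A h) <= c' * hnorm h.
  by apply: le_trans (hc h) _; apply: ler_wpM2r; [exact: sqrtr_ge0 | rewrite le_max lexx].
have c'0 : 0 <= c' by rewrite le_max lexx orbT.
have c'1 : c' < 1 by rewrite gt_max c1 ltr01.
exists (1 - c' ^+ 2); split; first by rewrite subr_gt0 expr_lt1.
by move=> h; have := sqnorm_le_of_hnorm hc' h; rewrite /defect; lra.
Qed.

(* The inner product of the defect operator (I - A^* A)^(1/2), equivalent to that of H
   because ||A|| < 1. *)
Definition defect_ip (x y : H) : C := hs_ip x y - ipK (A x) (A y).

Lemma sqnorm_defect_ip h : sqnorm defect_ip h = defect h.
Proof. by rewrite /sqnorm /defect_ip raddfB. Qed.

Lemma defect_ip_axioms : inner_product_axioms defect_ip.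
Proof.
split.
- by move=> a x y z; rewrite /defect_ip A_linear !ip_linear; ring.
- by move=> x y; rewrite /defect_ip rmorphB /= -!ip_conj.
- move=> x; split; last by rewrite -/(sqnorm _ x) sqnorm_defect_ip defect_ge0.
  by rewrite /defect_ip raddfB /= !ip_self subrr.
- move=> x /(congr1 (@complex.Re F)); rewrite -/(sqnorm _ x) sqnorm_defect_ip /= => Dx.
  have [k [k0 hk]] := defect_lower_bound; apply/sqnorm_eq0/eqP.
  by rewrite eq_le sqnorm_ge0 andbT -(pmulr_rle0 _ k0) -Dx hk.
Qed.

Lemma converges_defect_ip u l : converges defect_ip u l <-> converges (@hs_ip F H) u l.
Proof.
have [k [k0 hk]] := defect_lower_bound.
split=> ul e e0.
  have [N hN] := ul (k * e) (mulr_gt0 k0 e0); exists N => n /hN.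
  by rewrite sqnorm_defect_ip => /(le_lt_trans (hk _)); rewrite ltr_pM2l.
have [N hN] := ul e e0; exists N => n /hN.
by rewrite sqnorm_defect_ip /defect; have := sqnorm_ge0 (A (u n - l)); lra.
Qed.

Lemma defect_ip_complete : ip_complete defect_ip.
Proof.
apply/ip_completeP => u u_cauchy.
have [k [k0 hk]] := defect_lower_bound.
have [l ul] : exists l, converges (@hs_ip F H) u l.
  apply: (ip_completeP _).1 (@hs_complete F H) _ _ => e e0.
  have [N hN] := u_cauchy (k * e) (mulr_gt0 k0 e0); exists N => m n hm hn.
  by have := hN m n hm hn; rewrite sqnorm_defect_ip => /(le_lt_trans (hk _)); rewrite ltr_pM2l.
by exists l; apply/converges_defect_ip.
Qed.

Definition defect_space : hilbertSpace F := HilbertSpace defect_ip_axioms defect_ip_complete.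

Local Notation D := defect_space.
Local Notation ipD := (@hs_ip F D).

Lemma defect_sqnorm h : defect h = sqnorm ipD h.
Proof. exact: esym (sqnorm_defect_ip h). Qed.

Definition range_Q (h : D) := exists x, Q x = h.

Lemma range_Q_seq_closed : seq_closed_subspace range_Q.
Proof.
split; first by exists 0; rewrite (is_linear0 Q_linear).
  by move=> a _ _ [x <-] [y <-]; exists (a *: x + y); rewrite Q_linear.
move=> u l /choice[x Qx] /converges_defect_ip ul; apply: (@Q_range_closed x).
by apply: converges_ext ul => n; rewrite Qx.
Qed.

Lemma defect_proj_exists :
  exists Pm : D -> D, orth_proj range_Q Pm.
Proof.
have /choice[Pm hPm] := orth_proj_exists range_Q_seq_closed.
by exists Pm => h; have [? ?] := hPm h.
Qed.

Lemma residual_riesz w : exists z : D, forall y, ipK (U (A y) - P (U (A y))) w = ipD y z.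
Proof.
have [k [k0 hk]] := defect_lower_bound.
apply: (@riesz_representation _ D _ (nK w / k)).
  by move=> a x y; rewrite A_linear U_linear P_linear -ip_linear scalerBr opprD addrACA.
move=> y; apply: le_trans (cauchy_schwarz _ _) _.
have := orth_proj_residual_le P_proj (U (A y)); rewrite U_sqnorm => res.
have Ay : nK (A y) <= nH y by case: A_contr => _ /(_ y); rewrite ler_hnorm.
have r_le : nK (U (A y) - P (U (A y))) <= defect y / k.
  by rewrite ler_pdivlMr //; have := hk y; rewrite /defect; nra.
by rewrite -defect_sqnorm mulrAC mulrC -mulrA ler_wpM2l ?sqnorm_ge0.
Qed.

Section DefectProjection.
Variable Pm : D -> D.
Hypothesis Pm_proj : orth_proj range_Q Pm.

Let range_Q0 : range_Q 0.
Proof. by case: range_Q_seq_closed. Qed.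
Let range_Q_linear a h h' : range_Q h -> range_Q h' -> range_Q (a *: h + h').
Proof. by case: range_Q_seq_closed => _ + _; apply. Qed.

Lemma defect_proj_linear : is_linear Pm.
Proof. exact: orth_proj_linear range_Q0 range_Q_linear Pm_proj. Qed.

Lemma defect_proj_range h : exists x, Q x = Pm h.
Proof. by have [x <-] := orth_proj_in Pm_proj h; exists x. Qed.

Lemma defect_proj_Q x : Pm (Q x) = Q x.
Proof. by apply: (orth_proj_id range_Q0 range_Q_linear Pm_proj); exists x. Qed.

Lemma defect_proj_defect h : defect (Pm h) <= defect h.
Proof. by rewrite !defect_sqnorm; exact: orth_proj_sqnorm_le Pm_proj h. Qed.

Lemma defect_proj_interpolantP :
  contractive_interpolant P A U R Q (lift_interpolant (proj_G1 Pm) (proj_G2 Pm)).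
Proof.
exact: proj_interpolantP defect_proj_linear defect_proj_range defect_proj_Q defect_proj_defect.
Qed.

Lemma exists_defect_orth_vector : ~ (forall h, hclosure (fun y => exists x, y = Q x) h) ->
  exists e : D, 0 < defect e /\ forall x, ipD e (Q x) = 0.
Proof.
move=> /existsNP[h0 h0_far]; exists (h0 - Pm h0); split; last first.
  by move=> x; apply: (orth_proj_orth Pm_proj); exists x.
rewrite lt_def defect_ge0 andbT defect_sqnorm; apply: contra_notN h0_far.
move=> /eqP/sqnorm_eq0/eqP; rewrite subr_eq0 => /eqP ->.
have [x <-] := defect_proj_range h0; move=> eps eps0.
by exists (Q x); split; [exists x | rewrite subrr /hnorm /ip_norm -/(sqnorm _ _) sqnorm0 sqrtr0].
Qed.

End DefectProjection.

Section Perturbation.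
Variable Pm : D -> D.
Hypothesis Pm_proj : orth_proj range_Q Pm.
Variables (e : D) (w : K) (z : D) (s : F).
Hypothesis e_orth : forall x, ipD e (Q x) = 0.
Hypothesis w_wandering : wandering w.
Hypothesis z_riesz : forall y, ipK (U (A y) - P (U (A y))) w = ipD y z.
Hypothesis s_small : s ^+ 2 * ((nK w + defect z) * defect e) <= 1.

Let Pm_linear := defect_proj_linear Pm_proj.
Let Pm_range := defect_proj_range Pm_proj.
Local Notation G1 := (proj_G1 Pm).
Local Notation G2 := (proj_G2 Pm).

Definition pert_coef h := ipD h e.
Definition pert_G1 h := G1 h + pert_coef h *: (s%:C%C *: w).
Definition pert_G2 (h : D) : D := G2 h + pert_coef h *: (s%:C%C *: - z).

Lemma pert_coef_Q x : pert_coef (Q x) = 0.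
Proof. by rewrite /pert_coef ip_conj e_orth rmorph0. Qed.

Lemma pert_coef_sqmod_le h : sqmod (pert_coef h) <= defect (h - Pm h) * defect e.
Proof.
have Pm_e : ipD (Pm h) e = 0.
  by have [x <-] := Pm_range h; rewrite ip_conj e_orth rmorph0.
rewrite /pert_coef -[h in ipD h](subrK (Pm h)) ipDl Pm_e addr0 !defect_sqnorm.
exact: cauchy_schwarz.
Qed.

Lemma pert_coef_linear a x y : pert_coef (a *: x + y) = a * pert_coef x + pert_coef y.
Proof. exact: ip_linear. Qed.

Lemma pert_G1_linear : is_linear pert_G1.
Proof. exact: is_linear_add_scaled (proj_G1_linear Pm_linear Pm_range) pert_coef_linear. Qed.

Lemma pert_G2_linear : is_linear pert_G2.
Proof. exact: is_linear_add_scaled (proj_G2_linear Pm_linear Pm_range) pert_coef_linear. Qed.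

Lemma pert_G1_wandering h : wandering (pert_G1 h).
Proof.
rewrite /pert_G1 addrC; apply: wandering_linear; last exact: proj_G1_wandering.
by rewrite -[_ *: w]addr0; apply: wandering_linear w_wandering wandering0.
Qed.

Lemma pert_G1_Q x : pert_G1 (Q x) = U (A (R x)) - P (U (A (R x))).
Proof. by rewrite /pert_G1 pert_coef_Q scale0r addr0 proj_G1_Q //; exact: defect_proj_Q. Qed.

Lemma pert_G2_Q x : pert_G2 (Q x) = R x.
Proof. by rewrite /pert_G2 pert_coef_Q scale0r addr0 proj_G2_Q //; exact: defect_proj_Q. Qed.

Lemma pert_energy h : nK (pert_G1 h) + defect (pert_G2 h) <= defect h.
Proof.
have cross : ipK (G1 h) (pert_coef h *: (s%:C%C *: w)) +
    ipD (G2 h) (pert_coef h *: (s%:C%C *: - z)) = 0.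
  by rewrite !ipZr ipNr -z_riesz conjc_real; ring.
have base := proj_G_energy_Pm Pm_range h.
have pyth : defect h = defect (Pm h) + defect (h - Pm h).
  by rewrite !defect_sqnorm; exact: orth_proj_pythagoras Pm_proj h.
set S := s ^+ 2 * (nK w + defect z).
have S0 : 0 <= S.
  by apply: mulr_ge0; [exact: sqr_ge0 | exact: addr_ge0 (sqnorm_ge0 _) (defect_ge0 _)].
have small : sqmod (pert_coef h) * S <= defect (h - Pm h).
  apply: le_trans (ler_wpM2r S0 (pert_coef_sqmod_le h)) _.
  rewrite -mulrA -[leRHS]mulr1 ler_wpM2l ?defect_ge0 //.
  by rewrite mulrC /S -mulrA.
rewrite /pert_G1 /pert_G2 !defect_sqnorm sqnormD (@sqnormD _ D (G2 h)).
rewrite !sqnormZ sqnormN sqmodR -!defect_sqnorm.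
have : 2 * complex.Re (ipK (G1 h) (pert_coef h *: (s%:C%C *: w))) +
    2 * complex.Re (ipD (G2 h) (pert_coef h *: (s%:C%C *: - z))) = 0.
  by rewrite -mulrDr -raddfD /= cross mulr0.
rewrite /S in small; lra.
Qed.

Lemma pert_lift_defect_ip h :
  ipK (lift_defect pert_G1 pert_G2 h) w =
  ipK (lift_defect G1 G2 h) w + pert_coef h * s%:C%C * (nK w)%:C%C.
Proof.
have G_energy := proj_G_energy Pm_range (defect_proj_defect Pm_proj).
rewrite !lift_defect_ip_wandering //; first last.
- exact: pert_energy.
- exact: pert_G1_wandering.
- exact: proj_G1_wandering.
by rewrite /pert_G1 ipDl !ipZl ip_self mulrA.
Qed.

End Perturbation.

Lemma not_unique_interpolant :
  ~ (forall h, hclosure (fun y => exists x, y = Q x) h) -> ~ isometry_on H' T ->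
  ~ unique_interpolant.
Proof.
move=> Q_not_dense T_not_iso [B [_ B_unique]].
have [Pm Pm_proj] := defect_proj_exists.
have [e [e_pos e_orth]] := exists_defect_orth_vector Pm_proj Q_not_dense.
have [w [w_wand w_pos]] := exists_wandering_vector T_not_iso.
have [z z_riesz] := residual_riesz w.
pose q := (nK w + defect z) * defect e.
have q0 : 0 <= q.
  by apply: mulr_ge0; [exact: addr_ge0 (sqnorm_ge0 _) (defect_ge0 _) | exact: defect_ge0].
pose s := (1 + q)^-1.
have s_pos : 0 < s by rewrite invr_gt0; lra.
have s_small : s ^+ 2 * q <= 1.
  have sq : s * q = 1 - s by rewrite /s -[X in X - _](mulVf (x := 1 + q)) ?mulrBr ?mulr1; lra.
  by rewrite expr2 -mulrA sq; nra.
have pert_P : contractive_interpolant P A U R Q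
    (lift_interpolant (pert_G1 Pm e w s) (pert_G2 Pm e z s)).
  apply: lift_interpolantP.
  - exact: pert_G1_linear.
  - exact: pert_G2_linear.
  - by move=> h; apply: pert_G1_wandering.
  - by move=> h; apply: pert_energy.
  - by move=> x; apply: pert_G1_Q.
  - by move=> x; apply: pert_G2_Q.
have := congr1 (fun B' => ipK (B' e) w)
  (etrans (B_unique _ pert_P) (esym (B_unique _ (defect_proj_interpolantP Pm_proj)))).
rewrite /= /lift_interpolant !ipDl pert_lift_defect_ip // addrA => /eqP.
rewrite -[X in _ == X]addr0 (inj_eq (addrI _)) /pert_coef ip_self !mulf_eq0 !fmorph_eq0.
by rewrite -defect_sqnorm !gt_eqF.
Qed.

End StrictContraction.

End RelaxedCommutantLifting.

Theorem corollary3p1 (F : realType) (H0 H K : hilbertSpace F)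
    (H' : K -> Prop) (P : K -> K) (A : H -> K) (T U : K -> K) (R Q : H0 -> H) :
  closed_subspace H' ->
  orth_proj H' P ->
  contraction A -> (forall h, H' (A h)) ->
  contraction_on H' T ->
  minimal_isometric_lifting H' P T U ->
  bounded_op R -> bounded_op Q ->
  (forall x, T (A (R x)) = A (Q x)) ->
  op_le_sq R Q ->
  strict_contraction A ->
  left_invertible R ->
  ((exists B, contractive_interpolant P A U R Q B /\
       forall B', contractive_interpolant P A U R Q B' -> B' = B)
   <-> ((forall h, hclosure (fun y => exists x, y = Q x) h) \/ isometry_on H' T)).
Proof.
move=> H'cl Pp Ac AH Tc Ul Rb Qb TAR RQ As Rli; split.
- move=> uniq; apply: contrapT => /not_orP[Q_not_dense T_not_iso].
  exact: (not_unique_interpolant H'cl Pp Ac AH Tc Ul Rb Qb TAR RQ Rli As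
    Q_not_dense T_not_iso uniq).
- case=> [Q_dense | T_iso].
    exact: (unique_interpolant_of_dense H'cl Pp Ac AH Tc Ul Rb Qb TAR RQ Rli Q_dense).
  exact: (unique_interpolant_of_isometry H'cl Pp Ac AH Tc Ul TAR T_iso).
Qed.
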